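(* For every integer $n > 3$, there exists a permutation $p$ of $\{1,2,\ldots,n\}$ such that the number of distinct patterns contained in $p$ is greater than $\dfrac{2^{\,n - 2\sqrt{n}}}{\sqrt{n}}$.
   Context: Two sequences of distinct integers $q = q_1 q_2 \cdots q_k$ and $r = r_1 r_2 \cdots r_k$ of the same length are identically ordered if for all $i,j$, $q_i < q_j \iff r_i < r_j$. For a permutation $p = p_1 p_2 \cdots p_n$, a subsequence is $p_{i_1} p_{i_2}\cdots p_{i_k}$ with $i_1 < i_2 < \cdots < i_k$. A permutation $p$ contains a pattern $q$ (a permutation of $\{1,\ldots,k\}$) if some subsequence of $p$ of length $k$ is identically ordered with $q$. The number of distinct patterns contained in $p$ is the number of permutations $q$ (of any length $k \ge 0$ or $k\ge 1$) contained in $p$. *)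

From mathcomp Require Import all_boot all_fingroup.
From Stdlib Require Import Reals.
Set Implicit Arguments. Unset Strict Implicit. Unset Printing Implicit Defensive.

(* A permutation p of {1,..,n} is encoded as p : {perm 'I_n}; its one-line
   notation is p 0, p 1, ..., p (n-1) (values shifted by 1, which does not
   affect relative order). *)

Definition contains (n k : nat) (p : {perm 'I_n}) (q : {perm 'I_k}) : bool :=
  [exists f : {ffun 'I_k -> 'I_n},
     [forall i : 'I_k, forall j : 'I_k, (i < j) ==> (f i < f j)] &&
     [forall i : 'I_k, forall j : 'I_k,
        (p (f i) < p (f j)) == (q i < q j)]].

(* number of distinct (nonempty) patterns contained in p; a pattern of length
   k > n can never be contained, so k ranges over 1..n. *)
Definition npatterns (n : nat) (p : {perm 'I_n}) : nat :=
  \sum_(1 <= k < n.+1) #|[set q : {perm 'I_k} | contains p q]|.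

From mathcomp Require Import all_boot all_fingroup.
From Stdlib Require Import Reals.
From mathcomp Require Import zify.
From Stdlib Require Import Lra Psatz.
Set Implicit Arguments. Unset Strict Implicit. Unset Printing Implicit Defensive.

(* Write the positions 0, ..., n-1 row by row into a grid of width b, with
   b = ceil(sqrt n), and let the permutation read the grid column by column:
   position r b + c gets the rank of (c, r) in lexicographic order.  The first
   row and the first column hold fewer than 2 sqrt n + 1 positions.  A set S of
   positions containing all of them is determined by the pattern of p on S:
   the first row consists of the smallest positions of S and the first column
   of the smallest values, so both are recognised inside the pattern, and any
   other element r b + c is pinned down by its position relative to r b and its
   value relative to c.  The more than 2^(n - 2 sqrt n - 1) such sets thus
   give as many distinct patterns. *)

Definition rank (T : finType) (g : T -> nat) (x : T) : nat := #|[set y | g y < g x]|.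

Definition same_order (T : Type) (g h : T -> nat) := forall x y, (g x < g y) = (h x < h y).

Definition covers (T : Type) (g : T -> nat) (c : nat) := forall v, v < c -> exists x, g x = v.

Lemma same_order_sym (T : Type) (g h : T -> nat) : same_order g h -> same_order h g.
Proof. by move=> gh x y; rewrite gh. Qed.

Section Rank.

Variables (T : finType) (g : T -> nat).

Lemma rank_lt_card x : rank g x < #|T|.
Proof.
rewrite -cardsT; apply/proper_card/properP; split; first exact: subsetT.
by exists x; rewrite !inE ?ltnn.
Qed.

Lemma rank_lt (g_inj : injective g) x y : (rank g x < rank g y) = (g x < g y).
Proof.
have rank_mono u v : g u < g v -> rank g u < rank g v.
  move=> lt_uv; apply/proper_card/properP; split.
    by apply/subsetP=> z; rewrite !inE => /ltn_trans; apply.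
  by exists u; rewrite !inE ?lt_uv ?ltnn.
case: (ltngtP (g x) (g y)) => [/rank_mono -> // | /rank_mono lt_yx | /g_inj -> ].
- by apply/negbTE; rewrite -leqNgt ltnW.
- by rewrite !ltnn.
Qed.

Lemma rank_inj : injective g -> injective (rank g).
Proof.
move=> g_inj x y eq_rank; apply: (g_inj).
case: (ltngtP (g x) (g y)) => [lt_xy | lt_yx | //].
- by move: lt_xy; rewrite -(rank_lt g_inj) eq_rank ltnn.
- by move: lt_yx; rewrite -(rank_lt g_inj) eq_rank ltnn.
Qed.

Lemma same_order_rank h : same_order g h -> rank g =1 rank h.
Proof. by move=> gh x; apply: eq_card => y; rewrite !inE gh. Qed.

Lemma card_lt_cover (g_inj : injective g) c m :
  covers g c -> m <= c -> #|[set x | g x < m]| = m.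
Proof.
move=> g_cover; elim: m => [_ | m IH lt_mc].
  by apply: eq_card0 => x; rewrite inE.
have [x gx] := g_cover m lt_mc.
have -> : [set y | g y < m.+1] = x |: [set y | g y < m].
  by apply/setP => y; rewrite !inE ltnS leq_eqVlt -gx (inj_eq g_inj).
by rewrite cardsU1 inE gx ltnn IH // ltnW.
Qed.

Lemma rank_cover (g_inj : injective g) c x :
  covers g c -> g x < c -> rank g x = g x.
Proof. by move=> g_cover lt_xc; apply: card_lt_cover (ltnW lt_xc). Qed.

Lemma rank_cover_ge (g_inj : injective g) c x :
  covers g c -> c <= g x -> c <= rank g x.
Proof.
move=> g_cover le_cx; rewrite -{1}(card_lt_cover g_inj g_cover (leqnn c)).
by apply/subset_leq_card/subsetP => y; rewrite !inE => /leq_trans; apply.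
Qed.

End Rank.

Lemma same_order_cover_eq (T : finType) (g h : T -> nat) c :
  injective g -> injective h -> same_order g h -> covers g c -> covers h c ->
  forall x, g x < c -> g x = h x.
Proof.
move=> g_inj h_inj gh g_cover h_cover x lt_xc.
have rank_gx := rank_cover g_inj g_cover lt_xc.
have eq_rank := same_order_rank gh x.
have lt_hc : h x < c.
  rewrite ltnNge; apply/negP => /(rank_cover_ge h_inj h_cover).
  by rewrite -eq_rank rank_gx leqNgt lt_xc.
by rewrite -rank_gx eq_rank (rank_cover h_inj h_cover lt_hc).
Qed.

Section Standardization.

Variables (k : nat) (g : 'I_k -> nat).

(* The tie-break by [i] makes [std g] a permutation even when [g] is not
   injective, so that patterns can be defined without a side condition. *)
Definition std_key (i : 'I_k) : nat := g i * k + i.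

Lemma std_key_inj : injective std_key.
Proof.
move=> i j eq_ij; apply: val_inj.
by have := congr1 (modn^~ k) eq_ij; rewrite /std_key !modnMDl !modn_small.
Qed.

Lemma std_key_same_order : injective g -> same_order std_key g.
Proof.
have lex a c i j : a < c -> i < k -> a * k + i < c * k + j.
  move=> lt_ac lt_ik; apply: (@leq_trans (a.+1 * k)); first by rewrite mulSnr ltn_add2l.
  exact: leq_trans (leq_mul lt_ac (leqnn k)) (leq_addr j _).
move=> g_inj i j; rewrite /std_key.
case: (ltngtP (g i) (g j)) => [lt_ij | lt_ji | /g_inj -> ]; last by rewrite ltnn.
- by rewrite lex.
- by apply/negbTE; rewrite -leqNgt ltnW // lex.
Qed.

Definition std_fun (i : 'I_k) : 'I_k :=
  Ordinal (leq_trans (rank_lt_card std_key i) (eq_leq (card_ord k))).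

Lemma std_funE i : std_fun i = rank std_key i :> nat.
Proof. by []. Qed.

Lemma std_fun_inj : injective std_fun.
Proof.
move=> i j /(congr1 (@nat_of_ord k)); rewrite !std_funE.
exact: rank_inj std_key_inj i j.
Qed.

Definition std : {perm 'I_k} := perm std_fun_inj.

Lemma std_lt : injective g -> forall i j, (std i < std j) = (g i < g j).
Proof.
move=> g_inj i j; rewrite !permE.
by rewrite !std_funE (rank_lt std_key_inj) std_key_same_order.
Qed.

End Standardization.

Section MonotoneOrdinalMaps.

Variables (k n : nat) (f : 'I_k -> 'I_n).
Hypothesis f_mono : {mono f : i j / i < j}.

Lemma mono_leq : {mono f : i j / i <= j}.
Proof. by move=> i j; rewrite leqNgt f_mono -leqNgt. Qed.

Lemma mono_inj : injective f.
Proof. by move=> i j eq_f; apply/val_inj/eqP; rewrite eqn_leq -!mono_leq eq_f !leqnn. Qed.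

Lemma contains_std (p : {perm 'I_n}) : contains p (std (fun i => p (f i))).
Proof.
have pf_inj : injective (fun i => val (p (f i))).
  exact: inj_comp val_inj (inj_comp (@perm_inj _ p) mono_inj).
apply/existsP; exists (finfun f); apply/andP; split.
  by apply/forallP => i; apply/forallP => j; rewrite !ffunE f_mono implybb.
by apply/forallP => i; apply/forallP => j; rewrite !ffunE std_lt.
Qed.

End MonotoneOrdinalMaps.

Section SetEnumeration.

Variables (n k : nat) (x0 : 'I_n) (S : {set 'I_n}).
Hypothesis card_S : #|S| = k.

Lemma nth_enum_mono : {mono (fun i : 'I_k => nth x0 (enum S) i) : i j / i < j}.
Proof.
have sorted_S : sorted ltn (map val (enum S)).
  rewrite -[enum _](eq_filter (mem_enum _)) -(eq_filter (mem_map val_inj _)) -filter_map.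
  by rewrite (sorted_filter ltn_trans) // unlock val_ord_enum iota_ltn_sorted.
have homo_S (i j : 'I_k) : i < j -> nth x0 (enum S) i < nth x0 (enum S) j.
  have size_S (l : 'I_k) : l < size (map val (enum S)) by rewrite size_map -cardE card_S.
  move=> lt_ij; have := sorted_ltn_nth ltn_trans 0 sorted_S i j (size_S i) (size_S j) lt_ij.
  by rewrite !(nth_map x0) // -(size_map val).
move=> i j; case: (ltngtP i j) => [/homo_S -> // | /homo_S lt_ji | /val_inj -> ].
- by apply/negbTE; rewrite -leqNgt ltnW.
- by rewrite !ltnn.
Qed.

Lemma codom_nth_enum : codom (fun i : 'I_k => nth x0 (enum S) i) =i S.
Proof.
move=> t; apply/codomP/idP => [[i ->] | S_t].
  by rewrite -mem_enum mem_nth // -cardE card_S.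
have lt_tk : index t (enum S) < k by rewrite -card_S cardE index_mem mem_enum.
by exists (Ordinal lt_tk); rewrite nth_index // mem_enum.
Qed.

End SetEnumeration.

Lemma card_by_size (T : finType) (P : pred {set T}) : ~~ P set0 ->
  \sum_(1 <= k < #|T|.+1) #|[set S | P S && (#|S| == k)]| = #|[set S | P S]|.
Proof.
move=> P_set0.
under eq_bigr => k _ do rewrite -sum1dep_card big_mkcondr /=.
rewrite exchange_big -sum1dep_card /=; apply: eq_bigr => S P_S.
rewrite -big_mkcond /= (eq_bigl (fun k => k == #|S|)) => [|k]; last by rewrite eq_sym.
rewrite big_nat1_eq ltnS max_card card_gt0 andbT; case: eqP P_S => // ->.
by rewrite (negbTE P_set0).
Qed.

Lemma card_supersets (T : finType) (M : {set T}) :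
  #|[set S : {set T} | M \subset S]| = expn 2 #|~: M|.
Proof.
rewrite -card_powerset -(card_imset (powerset (~: M)) (@setC_inj T)); apply: eq_card => S.
rewrite inE; apply/idP/imsetP => [sub_MS | [C]].
  by exists (~: S); rewrite ?setCK // powersetE setCS.
by rewrite powersetE => sub_CM ->; rewrite -setCS setCK.
Qed.

Section Grid.

Variables (n b : nat).
Hypotheses (b_gt0 : 0 < b) (b_le_n : b <= n).

Let n_gt0 : 0 < n := leq_trans b_gt0 b_le_n.

Definition grid_key (t : 'I_n) : nat := t %% b * n + t %/ b.

Lemma div_ord_lt (t : 'I_n) : t %/ b < n.
Proof. exact: leq_ltn_trans (leq_div t b) (ltn_ord t). Qed.

Lemma grid_key_inj : injective grid_key.
Proof.
move=> s t eq_key; apply: val_inj.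
have := congr1 (divn^~ n) eq_key; have := congr1 (modn^~ n) eq_key.
rewrite /grid_key !modnMDl !(modn_small (div_ord_lt _)) => eq_div.
rewrite !divnMDl // !(divn_small (div_ord_lt _)) !addn0 => eq_mod.
by rewrite /= (divn_eq s b) (divn_eq t b) eq_div eq_mod.
Qed.

Definition grid_perm : {perm 'I_n} := std grid_key.

Lemma grid_perm_lt s t : (grid_perm s < grid_perm t) = (grid_key s < grid_key t).
Proof. exact: std_lt grid_key_inj s t. Qed.

Definition grid_marked : {set 'I_n} := [set t : 'I_n | (t < b) || (b %| t)].

Lemma card_grid_marked : #|grid_marked| <= b + n.-1 %/ b.
Proof.
pose g (u : 'I_b + 'I_(n.-1 %/ b)) : nat :=
  match u with inl c => c | inr r => r.+1 * b end.
have marked_g : {subset map val (enum grid_marked) <= codom g}.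
  move=> v /mapP [t]; rewrite mem_enum inE => /orP [lt_tb | /dvdnP [[|r] t_rb]] ->.
  - by apply/codomP; exists (inl (Ordinal lt_tb)).
  - by apply/codomP; exists (inl (Ordinal b_gt0)); rewrite /= t_rb.
  - have lt_r : r < n.-1 %/ b.
      by rewrite leq_divRL // -t_rb -ltnS prednK ?ltn_ord.
    by apply/codomP; exists (inr (Ordinal lt_r)); rewrite /= t_rb.
rewrite cardE -(size_map val) (leq_trans (uniq_leq_size _ marked_g)) //.
  by rewrite (map_inj_uniq val_inj) enum_uniq.
by rewrite size_codom card_sum !card_ord.
Qed.

Lemma covers_first_row k (f : 'I_k -> 'I_n) :
  {subset grid_marked <= codom f} -> covers (fun i => val (f i)) b.
Proof.
move=> marked_f v lt_vb; have lt_vn := leq_trans lt_vb b_le_n.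
have /marked_f/codomP [i t_fi] : Ordinal lt_vn \in grid_marked by rewrite inE lt_vb.
by exists i; rewrite -t_fi.
Qed.

Lemma covers_first_column k (f : 'I_k -> 'I_n) :
  {subset grid_marked <= codom f} -> covers (fun i => grid_key (f i)) (n.-1 %/ b).+1.
Proof.
move=> marked_f r; rewrite ltnS leq_divRL // => le_rb.
have lt_rb : r * b < n by rewrite (leq_ltn_trans le_rb) // prednK ?n_gt0.
have /marked_f/codomP [i t_fi] : Ordinal lt_rb \in grid_marked.
  by rewrite inE dvdn_mull ?orbT.
by exists i; rewrite -t_fi /grid_key /= modnMl mulnK.
Qed.

Lemma grid_marked_fixed k (f f' : 'I_k -> 'I_n) :
  {mono f : i j / i < j} -> {mono f' : i j / i < j} ->
  same_order (fun i => grid_key (f i)) (fun i => grid_key (f' i)) ->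
  {subset grid_marked <= codom f} -> {subset grid_marked <= codom f'} ->
  forall i, f i \in grid_marked -> f i = f' i.
Proof.
move=> f_mono f'_mono same_key marked_f marked_f' i.
rewrite inE => /orP [lt_b | dvd_b].
- apply: val_inj; apply: (same_order_cover_eq _ _ _ (covers_first_row marked_f)
    (covers_first_row marked_f')) => //.
  + exact: inj_comp val_inj (mono_inj f_mono).
  + exact: inj_comp val_inj (mono_inj f'_mono).
  + by move=> x y; rewrite f_mono f'_mono.
- apply: grid_key_inj; apply: (same_order_cover_eq _ _ same_key
    (covers_first_column marked_f) (covers_first_column marked_f')).
  + exact: inj_comp grid_key_inj (mono_inj f_mono).
  + exact: inj_comp grid_key_inj (mono_inj f'_mono).
  + by rewrite /grid_key (eqP dvd_b) ltnS leq_div2r // -ltnS prednK.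
Qed.

Lemma grid_coord_le k (f f' : 'I_k -> 'I_n) :
  {mono f : i j / i < j} -> {mono f' : i j / i < j} ->
  same_order (fun i => grid_key (f i)) (fun i => grid_key (f' i)) ->
  {subset grid_marked <= codom f'} -> (forall j, f' j \in grid_marked -> f j = f' j) ->
  forall i, f i %/ b <= f' i %/ b /\ f i %% b <= f' i %% b.
Proof.
move=> f_mono f'_mono same_key marked_f' fixed i.
have shared t : t \in grid_marked -> exists j, f j = t /\ f' j = t.
  move=> marked_t; have /codomP [j t_f'j] := marked_f' t marked_t.
  by exists j; rewrite fixed -t_f'j.
split.
  have lt_n : f i %/ b * b < n := leq_ltn_trans (leq_divM _ _) (ltn_ord _).
  have [|j [fj f'j]] := shared (Ordinal lt_n); first by rewrite inE dvdn_mull ?orbT.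
  rewrite leq_divRL //; have -> : f i %/ b * b = f' j by rewrite f'j.
  by rewrite (mono_leq f'_mono) -(mono_leq f_mono) fj leq_divM.
have lt_n : f i %% b < n := leq_trans (ltn_pmod _ b_gt0) b_le_n.
have [|j [fj f'j]] := shared (Ordinal lt_n); first by rewrite inE ltn_pmod.
have key_j : grid_key (Ordinal lt_n) = f i %% b * n.
  by rewrite /grid_key /= modn_small ?divn_small ?ltn_pmod // addn0.
have := same_key i j; rewrite /= fj f'j key_j {1}/grid_key ltnNge leq_addr /=.
move=> /esym/negbT; rewrite -leqNgt /grid_key => le_key.
by rewrite -ltnS -(ltn_pmul2r n_gt0) (leq_ltn_trans le_key) // mulSn addnC ltn_add2r div_ord_lt.
Qed.

Lemma grid_occurrence_unique k (f f' : 'I_k -> 'I_n) :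
  {mono f : i j / i < j} -> {mono f' : i j / i < j} ->
  same_order (fun i => grid_key (f i)) (fun i => grid_key (f' i)) ->
  {subset grid_marked <= codom f} -> {subset grid_marked <= codom f'} ->
  f =1 f'.
Proof.
move=> f_mono f'_mono same_key marked_f marked_f'.
have same_key' := same_order_sym same_key.
have fixed := grid_marked_fixed f_mono f'_mono same_key marked_f marked_f'.
have fixed' := grid_marked_fixed f'_mono f_mono same_key' marked_f' marked_f.
move=> i; apply: val_inj; rewrite /= (divn_eq (f i) b) (divn_eq (f' i) b).
have [le_div le_mod] := grid_coord_le f_mono f'_mono same_key marked_f'
  (fun j marked_j => esym (fixed' j marked_j)) i.
have [ge_div ge_mod] := grid_coord_le f'_mono f_mono same_key' marked_f
  (fun j marked_j => esym (fixed j marked_j)) i.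
by congr (_ * b + _); apply/anti_leq; rewrite ?le_div ?ge_div ?le_mod ?ge_mod.
Qed.

Lemma card_marked_supersets_le (k : nat) :
  #|[set S : {set 'I_n} | (grid_marked \subset S) && (#|S| == k)]| <=
  #|[set q : {perm 'I_k} | contains grid_perm q]|.
Proof.
pose x0 : 'I_n := Ordinal n_gt0.
pose occ (S : {set 'I_n}) (i : 'I_k) := nth x0 (enum S) i.
rewrite -(@card_in_imset _ _ (fun S => std (fun i => grid_perm (occ S i)))).
  apply/subset_leq_card/subsetP => q /imsetP [S]; rewrite inE => /andP [_ /eqP card_S] ->.
  by rewrite inE; apply: contains_std; apply: nth_enum_mono.
move=> S S'; rewrite !inE => /andP [sub_S /eqP card_S] /andP [sub_S' /eqP card_S'] eq_std.
have occ_mono := nth_enum_mono x0 card_S; have occ_mono' := nth_enum_mono x0 card_S'.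
have pattern_inj (T : {set 'I_n}) :
    #|T| = k -> injective (fun i => val (grid_perm (occ T i))).
  move=> card_T; apply: inj_comp val_inj (inj_comp (@perm_inj _ _) _).
  exact: mono_inj (nth_enum_mono x0 card_T).
have eq_occ : occ S =1 occ S'.
  apply: grid_occurrence_unique => //.
  - move=> i j; rewrite -!grid_perm_lt -(std_lt (pattern_inj _ card_S)) eq_std.
    exact: std_lt (pattern_inj _ card_S') i j.
  - by move=> t /(subsetP sub_S); rewrite codom_nth_enum.
  - by move=> t /(subsetP sub_S'); rewrite codom_nth_enum.
apply/setP => t; rewrite -(codom_nth_enum x0 card_S) -(codom_nth_enum x0 card_S').
by rewrite (eq_codom eq_occ).
Qed.

Lemma grid_npatterns_ge : expn 2 (n - (b + n.-1 %/ b)) <= npatterns grid_perm.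
Proof.
have le_unmarked : n - (b + n.-1 %/ b) <= #|~: grid_marked|.
  by have := cardsC grid_marked; have := card_grid_marked; rewrite card_ord; lia.
apply: leq_trans (leq_pexp2l _ le_unmarked) _ => //.
rewrite -card_supersets -(card_by_size (P := fun S => grid_marked \subset S)).
  by rewrite card_ord; apply: leq_sum => k _; apply: card_marked_supersets_le.
rewrite subset0; apply/set0Pn; exists (Ordinal n_gt0); by rewrite inE b_gt0.
Qed.

End Grid.

Section RealBounds.

Local Open Scope R_scope.

Lemma INR_expn2 (m : nat) : INR (expn 2 m) = 2 ^ m.
Proof. by elim: m => [|m IH]; rewrite ?expnS ?mulnE ?mult_INR ?IH //=; ring. Qed.

Lemma Rpower_sub_two_sqrt_lt (n m : nat) : (4 <= n)%nat ->
  INR n < INR m + 2 * sqrt (INR n) + 1 ->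
  Rpower 2 (INR n - 2 * sqrt (INR n)) / sqrt (INR n) < INR (expn 2 m).
Proof.
move=> le_4n lt_n_m.
have n_ge4 : 4 <= INR n by have := le_INR 4 n (elimT leP le_4n); rewrite /= => ?; lra.
have := sqrt_sqrt (INR n) ltac:(lra); have := sqrt_pos (INR n).
move: lt_n_m; set r := sqrt (INR n) => lt_n_m r_ge0 rr.
have r_ge2 : 2 <= r by nra.
rewrite INR_expn2 -Rpower_pow; last lra.
apply: (Rle_lt_trans _ (Rpower 2 (INR n - 2 * r + - 1))); last by apply: Rpower_lt; lra.
rewrite Rpower_plus Rpower_Ropp Rpower_1; last lra.
have pow_gt0 : 0 < Rpower 2 (INR n - 2 * r) by apply: exp_pos.
by apply: Rmult_le_compat_l; [lra | apply: Rinv_le_contravar; lra].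
Qed.

Lemma succ_add_lt_two_sqrt (n s h : nat) : (s * s < n)%nat -> (n <= s.+1 * s.+1)%nat ->
  (h * s.+1 < n)%nat -> INR (s.+1 + h) < 2 * sqrt (INR n) + 1.
Proof.
move=> /ltP lt_s /leP le_s /ltP lt_h.
have := lt_INR _ _ lt_s; have := le_INR _ _ le_s; have := lt_INR _ _ lt_h.
rewrite !mult_INR S_INR => {}lt_h {}le_s {}lt_s.
have := sqrt_sqrt (INR n) (pos_INR n); have := sqrt_pos (INR n).
have := pos_INR s; have := pos_INR h.
set r := sqrt (INR n) => h_ge0 s_ge0 r_ge0 rr.
have lt_sr : INR s < r by nra.
have le_rs : r <= INR s + 1 by nra.
have lt_hr : INR h < r by nra.
rewrite -plusE plus_INR S_INR; lra.
Qed.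

End RealBounds.

Theorem theorem1 (n : nat) (hn : 3 < n) :
  exists p : {perm 'I_n},
    (Rpower 2 (INR n - 2 * sqrt (INR n)) / sqrt (INR n) < INR (npatterns p))%R.
Proof.
pose s := Nat.sqrt n.-1.
have [sq_le sq_gt] := Nat.sqrt_spec' n.-1; rewrite -/s in sq_le sq_gt.
have b_le_n : s.+1 <= n by nia.
pose h := n.-1 %/ s.+1.
have h_lt : h * s.+1 < n by have := leq_divM n.-1 s.+1; lia.
exists (grid_perm n s.+1).
apply: Rlt_le_trans (le_INR _ _ (leP (grid_npatterns_ge (ltn0Sn s) b_le_n))).
apply: Rpower_sub_two_sqrt_lt => //; rewrite -/h.
have := @succ_add_lt_two_sqrt n s h ltac:(lia) ltac:(lia) h_lt.
have : (INR n <= INR (n - (s.+1 + h)) + INR (s.+1 + h))%R.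
  by rewrite -plus_INR; apply/le_INR/leP; lia.
lra.
Qed.
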